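(* Let $\mathbb{F}$ be a field with $\mathrm{char}(\mathbb{F})\neq 2$ and let $L$ be a finite-dimensional semisimple Lie algebra over $\mathbb{F}$. Then $b(L)\geq 2$.
   Context: For $x\in L$, $b(x)=\mathrm{rank}(\mathrm{ad}_x)$ and the breadth of $L$ is $b(L)=\max\{b(x)\mid x\in L\}$. *)

From HB Require Import structures.
From mathcomp Require Import all_boot all_order all_algebra.
Set Implicit Arguments. Unset Strict Implicit. Unset Printing Implicit Defensive.
Import GRing.Theory.
Local Open Scope ring_scope.

Definition is_lie_bracket (F : fieldType) (L : vectType F) (br : L -> L -> L) : Prop :=
  [/\ (forall x (a : F) u v, br x (a *: u + v) = a *: br x u + br x v),
      (forall y (a : F) u v, br (a *: u + v) y = a *: br u y + br v y),
      (forall x, br x x = 0) &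
      (forall x y z, br x (br y z) + br y (br z x) + br z (br x y) = 0)].

Definition lie_ideal (F : fieldType) (L : vectType F) (br : L -> L -> L)
  (I : {vspace L}) : Prop :=
  forall x y, y \in I -> br x y \in I.

(* [U, U] : the subspace spanned by all brackets of elements of U
   (by bilinearity, spanned by brackets of basis elements) *)
Definition lie_derived (F : fieldType) (L : vectType F) (br : L -> L -> L)
  (U : {vspace L}) : {vspace L} :=
  (<<[seq br u v | u <- vbasis U, v <- vbasis U]>>)%VS.

Definition lie_derived_series (F : fieldType) (L : vectType F) (br : L -> L -> L)
  (n : nat) (U : {vspace L}) : {vspace L} :=
  iter n (lie_derived br) U.

Definition lie_solvable (F : fieldType) (L : vectType F) (br : L -> L -> L)
  (U : {vspace L}) : Prop :=
  exists n, lie_derived_series br n U = 0%VS.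

Definition lie_semisimple (F : fieldType) (L : vectType F) (br : L -> L -> L) : Prop :=
  (fullv : {vspace L}) != 0%VS /\
  (forall I : {vspace L}, lie_ideal br I -> lie_solvable br I -> I = 0%VS).

Definition lie_ad (F : fieldType) (L : vectType F) (br : L -> L -> L) (x : L)
  : 'End(L) := linfun (br x).

Definition lie_b (F : fieldType) (L : vectType F) (br : L -> L -> L) (x : L) : nat :=
  \dim (limg (lie_ad br x)).

(* If every ad_v had rank at most 1, then for a nonzero bracket y = [x, z] the
   image of each ad_v would be the line spanned by any nonzero value of ad_v.
   Comparing ad_u with ad_x and ad_(u + x) along z shows that every bracket lies
   on the line F y, which is therefore an abelian, hence solvable, ideal; in a
   semisimple Lie algebra it must vanish, contradicting y != 0.  If instead all
   brackets vanish, L itself is a nonzero solvable ideal. *)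

From HB Require Import structures.
From Stdlib Require Import Classical_Prop.
From mathcomp Require Import all_boot all_order all_algebra.
Import GRing.Theory.
Local Open Scope ring_scope.

Section LieBracket.
Variables (F : fieldType) (L : vectType F) (br : L -> L -> L).
Hypothesis br_lie : is_lie_bracket br.

Let br_linear_r x : linear (br x).
Proof. by case: br_lie => linr _ _ _ a u v; apply: linr. Qed.

HB.instance Definition _ x := GRing.isLinear.Build F L L *:%R (br x) (br_linear_r x).

Lemma lie_adE x v : lie_ad br x v = br x v.
Proof. exact: lfunE. Qed.

Lemma brDl u v w : br (u + v) w = br u w + br v w.
Proof. by case: br_lie => _ linl _ _; rewrite -[u]scale1r linl !scale1r. Qed.

Lemma br0l v : br 0 v = 0.
Proof. by apply/(addrI (br 0 v)); rewrite -brDl !addr0. Qed.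

Lemma brZl a u w : br (a *: u) w = a *: br u w.
Proof. by case: br_lie => _ linl _ _; rewrite -[a *: u]addr0 linl br0l addr0. Qed.

Lemma brZr a u w : br w (a *: u) = a *: br w u.
Proof. exact: linearZ. Qed.

Lemma brC u v : br u v = - br v u.
Proof.
case: br_lie => _ _ brxx _; apply/eqP; rewrite -addr_eq0.
by have := brxx (u + v); rewrite brDl !linearD /= !brxx add0r addr0 => ->.
Qed.

Lemma lie_derived_eq0 (U : {vspace L}) :
  {in U &, forall u v, br u v = 0} -> lie_derived br U = 0%VS.
Proof.
move=> brU0; apply/eqP; rewrite -subv0; apply/span_subvP => w.
by case/allpairsP => -[u v] [/= Uu Uv ->]; rewrite brU0 ?mem0v //; apply: vbasis_mem.
Qed.

Lemma lie_abelian_solvable (U : {vspace L}) :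
  {in U &, forall u v, br u v = 0} -> lie_solvable br U.
Proof. by move=> brU0; exists 1%N; apply: lie_derived_eq0. Qed.

Lemma lie_line_abelian (y : L) : {in <[y]>%VS &, forall u v, br u v = 0}.
Proof.
case: br_lie => _ _ brxx _.
by move=> _ _ /vlineP[a ->] /vlineP[b ->]; rewrite brZl brZr brxx !scaler0.
Qed.

Lemma semisimple_abelian_ideal_eq0 (I : {vspace L}) :
  lie_semisimple br -> lie_ideal br I -> {in I &, forall u v, br u v = 0} ->
  I = 0%VS.
Proof. by case=> _ ss idI abI; apply: ss => //; apply: lie_abelian_solvable. Qed.

Lemma semisimple_nonabelian :
  lie_semisimple br -> exists x z, br x z != 0.
Proof.
move=> ss; case: (ss) => full_neq0 _.
apply: NNPP => abelian; case/eqP: full_neq0.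
apply: semisimple_abelian_ideal_eq0 => // [u v _ | u v _ _]; first exact: memvf.
by apply/eqP/negPn/negP => brNuv; apply: abelian; exists u, v.
Qed.

Lemma lie_ad_img_line {v z} :
  (lie_b br v <= 1)%N -> br v z != 0 -> limg (lie_ad br v) = <[br v z]>%VS.
Proof.
move=> b_le1 brvz_neq0; apply/esym/eqP.
rewrite eqEdim dim_vline brvz_neq0 b_le1 andbT -memvE.
by rewrite -lie_adE memv_img ?memvf.
Qed.

Lemma lie_br_line {v z} w :
  (lie_b br v <= 1)%N -> br v z != 0 -> br v w \in <[br v z]>%VS.
Proof.
by move=> b_le1 /(lie_ad_img_line b_le1) <-; rewrite -lie_adE memv_img ?memvf.
Qed.

Section BreadthOne.
Hypothesis breadth_le1 : forall v, (lie_b br v <= 1)%N.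
Variables x z : L.
Hypothesis brxz_neq0 : br x z != 0.

Let y := br x z.

Let br_line_of_z {v} w : br v z \in <[y]>%VS -> br v z != 0 -> br v w \in <[y]>%VS.
Proof.
move=> vz_y vz_neq0; have vz_sub : (<[br v z]> <= <[y]>)%VS by rewrite -memvE.
exact: subvP vz_sub _ (lie_br_line w (breadth_le1 v) vz_neq0).
Qed.

Let brz_line w : br z w \in <[y]>%VS.
Proof.
have zx_neq0 : br z x != 0 by rewrite brC oppr_eq0.
have zx_y : (<[br z x]> <= <[y]>)%VS by rewrite -memvE brC memvN memv_line.
exact: subvP zx_y _ (lie_br_line w (breadth_le1 z) zx_neq0).
Qed.

(* When [u, z] = 0, write ad_u = ad_(u + x) - ad_x, both of which are handled
   by [br_line_of_z] since [u + x, z] = [x, z] = y. *)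
Lemma breadth_le1_br_line u w : br u w \in <[y]>%VS.
Proof.
have uz_y : br u z \in <[y]>%VS by rewrite brC memvN brz_line.
have [uz0 | uz_neq0] := eqVneq (br u z) 0; last exact: br_line_of_z.
have uxz : br (u + x) z = y by rewrite brDl uz0 add0r.
have uxz_y : br (u + x) z \in <[y]>%VS by rewrite uxz memv_line.
have uxz_neq0 : br (u + x) z != 0 by rewrite uxz.
have := memvB (br_line_of_z w uxz_y uxz_neq0)
              (br_line_of_z w (memv_line y) brxz_neq0).
by rewrite brDl addrK.
Qed.

Lemma breadth_le1_line_ideal : lie_ideal br <[y]>%VS.
Proof. by move=> u w _; apply: breadth_le1_br_line. Qed.

End BreadthOne.

Lemma semisimple_breadth_gt1 :
  lie_semisimple br -> ~ (forall v, (lie_b br v <= 1)%N).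
Proof.
move=> ss breadth_le1; have [x [z brxz_neq0]] := semisimple_nonabelian ss.
have y0 : <[br x z]>%VS = 0%VS.
  apply: semisimple_abelian_ideal_eq0 ss _ (@lie_line_abelian _).
  exact: breadth_le1_line_ideal.
by move: brxz_neq0; have := memv_line (br x z); rewrite y0 memv0 => ->.
Qed.

End LieBracket.

Theorem proposition2p5 (F : fieldType) (L : vectType F) (br : L -> L -> L) :
  (2%N \notin [pchar F]) ->
  is_lie_bracket br ->
  lie_semisimple br ->
  exists x : L, (2 <= lie_b br x)%N.
Proof.
move=> _ br_lie ss; apply: NNPP => no_wide.
have b_le1 v : (lie_b br v <= 1)%N.
  by rewrite leqNgt; apply/negP => wide; apply: no_wide; exists v.
exact: semisimple_breadth_gt1 br_lie ss b_le1.
Qed.
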